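(* Let $s>0$, $Y>3s$, and for $\tau\geq 0$ put $x_+(\tau)=\frac sYe^{s\tau}$, $\tau^*=\frac1s\ln\left(\frac Y{3s}\right)$, $\tau_c=\frac1s\ln\left(\frac Ys\right)$. Consider the delay system $\dot x=x(1-x)-yx$, $\dot y=-sy+Ye^{-s\tau}y(t-\tau)x(t-\tau)$, its coexistence equilibrium $E_+=(x_+(\tau),1-x_+(\tau))$ (positive for $\tau\in[0,\tau_c)$), and the characteristic equation of its linearization at $E_+$, \[ \lambda^2+s\left(1+\tfrac{e^{s\tau}}{Y}\right)\lambda+\left(-s\lambda+s\left(1-\tfrac{2se^{s\tau}}{Y}\right)\right)e^{-\lambda\tau}+\tfrac{s^2e^{s\tau}}{Y}=0. \tag{C} \] Define on $[0,\tau^*]$ \[ \omega_+(\tau)=\sqrt{\tfrac12\left(-x_+(\tau)^2+\sqrt{x_+(\tau)^4+s^2\left(12x_+(\tau)^2-16x_+(\tau)+4\right)}\right)}, \] \[ h_2(\omega,\tau)=\frac{\omega^2(1+s-x_+(\tau))-(1-2x_+(\tau))s\,x_+(\tau)}{s\left((1-2x_+(\tau))^2+\omega^2\right)},\qquad \theta(\tau)=\arccos\big(h_2(\omega_+(\tau),\tau)\big), \] and for each integer $n\geq0$ let $\tau_n^1<\dots<\tau_n^{j_n}$ be the points $\tau\in(0,\tau^* )$ with $\tau\omega_+(\tau)=\theta(\tau)+2n\pi$. Assume there exists an integer $N\geq0$ such that $(2N+1)\pi\leq\max_{\tau\in[0,\tau^*]}\tau\omega_+(\tau)\leq2(N+1)\pi$.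 Then: \begin{enumerate} \item For $0\leq n\leq N$, the curves $\theta(\tau)+2n\pi$ and $\tau\omega_+(\tau)$ intersect at least twice in $(0,\tau^* )$. \item For $n\geq N+1$, the curves $\theta(\tau)+2n\pi$ and $\tau\omega_+(\tau)$ do not intersect in $(0,\tau^* )$. \item If $\theta(\tau)+2n\pi$ and $\tau\omega_+(\tau)$ intersect for some $n\geq0$, then $\tau_0^1$ is the smallest and $\tau_0^{j_0}$ the largest value of $\tau$ for which (C) has a pair of purely imaginary roots. \item $E_+$ is locally asymptotically stable for $\tau\in[0,\tau_0^1)\cup(\tau_0^{j_0},\tau_c)$. \end{enumerate}
   Context: Local asymptotic stability of $E_+$ means all roots of (C) have negative real part. *)

From Stdlib Require Import Reals.
From Coquelicot Require Import Coquelicot.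
Open Scope R_scope.

Definition xplus (s Y tau : R) : R := s / Y * exp (s * tau).
Definition tau_star (s Y : R) : R := / s * ln (Y / (3 * s)).
Definition tau_c (s Y : R) : R := / s * ln (Y / s).

Definition omega_plus (s Y tau : R) : R :=
  let x := xplus s Y tau in
  sqrt (/ 2 * (- x ^ 2 + sqrt (x ^ 4 + s ^ 2 * (12 * x ^ 2 - 16 * x + 4)))).

Definition h2 (s Y w tau : R) : R :=
  let x := xplus s Y tau in
  (w ^ 2 * (1 + s - x) - (1 - 2 * x) * s * x) / (s * ((1 - 2 * x) ^ 2 + w ^ 2)).

Definition theta (s Y tau : R) : R := acos (h2 s Y (omega_plus s Y tau) tau).

Definition cexp (z : C) : C := (exp (Re z) * cos (Im z), exp (Re z) * sin (Im z)).

Definition charC (s Y tau : R) (l : C) : C :=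
  Cplus (Cplus (Cplus (Cmult l l) (Cmult (RtoC (s * (1 + exp (s * tau) / Y))) l))
    (Cmult (Cplus (Cmult (RtoC (- s)) l) (RtoC (s * (1 - 2 * s * exp (s * tau) / Y))))
       (cexp (Cmult (RtoC (- tau)) l))))
  (RtoC (s ^ 2 * exp (s * tau) / Y)).

Definition crossing (s Y : R) (n : nat) (tau : R) : Prop :=
  0 < tau < tau_star s Y /\
  tau * omega_plus s Y tau = theta s Y tau + 2 * INR n * PI.

(* (C) has a pair of purely imaginary roots +- i w, w > 0 (roots of a
   real-coefficient equation come in conjugate pairs) *)
Definition has_imag_pair (s Y tau : R) : Prop :=
  exists w : R, 0 < w /\ charC s Y tau (0, w) = RtoC 0.

Definition E_plus_LAS (s Y tau : R) : Prop :=
  forall l : C, charC s Y tau l = RtoC 0 -> Re l < 0.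

From Stdlib Require Import Reals Lra Psatz.
From Coquelicot Require Import Coquelicot.
Open Scope R_scope.

(* Write x = x_+(tau) and lambda = u + i v.  Equation (C) reads
   P(lambda) + Q(lambda) e^{-lambda tau} = 0 with P(lambda) = lambda^2 + (s + x) lambda + s x
   and Q(lambda) = s (1 - 2 x) - s lambda.
   A root with u >= 0 has |P| <= |Q|, while on the right half-plane
   |P|^2 - |Q|^2 >= F(v) = v^4 + x^2 v^2 + s^2 (3x - 1)(1 - x): this rules out such roots when
   x >= 1/3 and otherwise forces |v| <= omega_+, the positive zero of F.
   On a root, N = - conj(P) Q equals e^{-u tau} |Q|^2 e^{i v tau}, so v tau is an argument of N.
   Comparing arguments (by cross products) shows that this argument is at least the argument theta
   of N(i omega_+), which is impossible while tau omega_+ < theta.  Hence E_+ is stable wherever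
   tau omega_+ - theta < 0 or tau >= tau^*, and purely imaginary roots occur exactly where
   tau omega_+ = theta mod 2 pi.  The rest is the intermediate value theorem for
   tau omega_+ - theta, which is negative at 0 and equals -pi at tau^*, where x = 1/3 and
   omega_+ = 0. *)

Definition cross (a1 a2 b1 b2 : R) : R := a1 * b2 - a2 * b1.

Lemma cross_nonneg_trans a1 a2 b1 b2 c1 c2 :
  0 < a2 -> 0 < b2 -> 0 <= c2 ->
  0 <= cross a1 a2 b1 b2 -> 0 <= cross b1 b2 c1 c2 -> 0 <= cross a1 a2 c1 c2.
Proof.
  intros Ha Hb Hc Hab Hbc.
  assert (E : b2 * cross a1 a2 c1 c2 = cross a1 a2 b1 b2 * c2 + cross b1 b2 c1 c2 * a2)
    by (unfold cross; ring).
  assert (0 <= b2 * cross a1 a2 c1 c2) by (rewrite E; nra).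
  nra.
Qed.

Lemma sin2_cos2_pow a : sin a ^ 2 + cos a ^ 2 = 1.
Proof. rewrite <- (sin2_cos2 a). unfold Rsqr. ring. Qed.

Lemma exp_opp_le_1 a : 0 <= a -> exp (- a) <= 1.
Proof.
  intros [Ha | <-].
  - rewrite <- exp_0. left. apply exp_increasing. lra.
  - rewrite Ropp_0, exp_0. lra.
Qed.

Lemma continuity_pt_locally_same_sign (g : R -> R) m : continuity_pt g m -> g m <> 0 ->
  exists d, 0 < d /\ forall z, Rabs (z - m) < d -> 0 < g z * g m.
Proof.
  intros Hc Hne.
  destruct (Hc (Rabs (g m)) (Rabs_pos_lt _ Hne)) as (d & Hd & Hball).
  exists d. split; [exact Hd |]. intros z Hz.
  destruct (Req_dec z m) as [-> | Hzm].
  - assert (0 < g m * g m) by (apply Rsqr_pos_lt; exact Hne). lra.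
  - assert (Hclose : Rabs (g z - g m) < Rabs (g m))
      by (apply (Hball z); split; [split; [exact I | congruence] | exact Hz]).
    destruct (Rcase_abs (g m)) as [Hneg | Hpos].
    + rewrite (Rabs_left (g m)) in Hclose by lra. apply Rabs_def2 in Hclose. nra.
    + rewrite (Rabs_right (g m)) in Hclose by lra. apply Rabs_def2 in Hclose.
      assert (0 < g m) by lra. nra.
Qed.

Lemma first_zero (g : R -> R) a b :
  (forall t, a <= t <= b -> continuity_pt g t) -> g a < 0 ->
  (exists z, a < z < b /\ g z = 0) ->
  exists m, a < m < b /\ g m = 0 /\ (forall t, a <= t < m -> g t < 0).
Proof.
  intros Hc Ha (z0 & Hz0 & Hgz0).
  set (S := fun y => a <= y /\ forall z, a <= z <= y -> g z < 0).
  assert (HSa : S a) by (split; [lra | intros z Hz; replace z with a by lra; exact Ha]).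
  assert (HSz0 : is_upper_bound S z0).
  { intros y [Hy Hneg]. destruct (Rle_lt_dec y z0) as [| Hlt]; [assumption |].
    specialize (Hneg z0 ltac:(lra)). lra. }
  destruct (completeness S (ex_intro _ z0 HSz0) (ex_intro _ a HSa)) as (m & Hub & Hlub).
  assert (Ham : a <= m) by exact (Hub a HSa).
  assert (Hmz0 : m <= z0) by exact (Hlub z0 HSz0).
  assert (Hbelow : forall t, a <= t < m -> g t < 0).
  { intros t Ht. destruct (Rlt_le_dec (g t) 0) as [| Hge]; [assumption | exfalso].
    assert (m <= t); [| lra].
    apply Hlub. intros y [Hy Hneg]. destruct (Rle_lt_dec y t) as [| Hty]; [assumption |].
    specialize (Hneg t ltac:(lra)). lra. }
  assert (Hgm : g m = 0).
  { destruct (Req_dec (g m) 0) as [| Hne]; [assumption | exfalso].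
    destruct (continuity_pt_locally_same_sign g m (Hc m ltac:(lra)) Hne) as (d & Hd & Hsign).
    destruct (Rcase_abs (g m)) as [Hneg | Hpos].
    - assert (HS : S (m + d / 2)); [| specialize (Hub _ HS); lra].
      split; [lra |]. intros z Hz.
      destruct (Rlt_le_dec z m); [apply Hbelow; lra |].
      specialize (Hsign z ltac:(apply Rabs_def1; lra)). nra.
    - assert (Ham' : a < m) by (destruct Ham as [| <-]; [assumption | lra]).
      set (z := Rmax a (m - d / 2)).
      assert (Hz : a <= z < m) by (unfold z; split; [apply Rmax_l | apply Rmax_lub_lt; lra]).
      assert (m - d / 2 <= z) by apply Rmax_r.
      specialize (Hsign z ltac:(apply Rabs_def1; lra)). specialize (Hbelow z Hz). nra. }
  exists m. split; [| split; assumption].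
  split; [destruct Ham as [| <-]; [assumption | lra] | lra].
Qed.

Lemma last_zero (g : R -> R) a b :
  (forall t, a <= t <= b -> continuity_pt g t) -> g b < 0 ->
  (exists z, a < z < b /\ g z = 0) ->
  exists m, a < m < b /\ g m = 0 /\ (forall t, m < t <= b -> g t < 0).
Proof.
  intros Hc Hb (z0 & Hz0 & Hgz0).
  destruct (first_zero (fun t => g (- t)) (- b) (- a)) as (m & Hm & Hgm & Hbelow).
  - intros t Ht. apply (continuity_pt_comp Ropp g t).
    + apply continuity_pt_opp, derivable_continuous_pt, derivable_pt_id.
    + apply Hc. lra.
  - rewrite Ropp_involutive. exact Hb.
  - exists (- z0). split; [lra | rewrite Ropp_involutive; exact Hgz0].
  - exists (- m). split; [lra | split; [exact Hgm |]].
    intros t Ht. rewrite <- (Ropp_involutive t). apply Hbelow. lra.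
Qed.

Lemma continuous_pow_comp (f : R -> R) n x : continuous f x -> continuous (fun y => f y ^ n) x.
Proof.
  intros Hf. induction n as [| n IH]; simpl.
  - apply continuous_const.
  - exact (continuous_mult (K := R_AbsRing) _ _ _ Hf IH).
Qed.

(* Match on the head symbol first: applying Coquelicot's generic lemmas ([continuous_plus], ...)
   to a goal of another shape can send unification into a practically endless search. *)
Ltac solve_continuous :=
  repeat match goal with
  | |- continuous (fun _ => ?c) _ => apply continuous_const
  | |- continuous (fun _ => _ + _) _ => apply (continuous_plus (V := R_NormedModule))
  | |- continuous (fun _ => _ - _) _ => apply (continuous_minus (V := R_NormedModule))
  | |- continuous (fun _ => - _) _ => apply (continuous_opp (V := R_NormedModule))
  | |- continuous (fun _ => _ * _) _ => apply (continuous_mult (K := R_AbsRing))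
  | |- continuous (fun _ => _ ^ _) _ => apply continuous_pow_comp
  | |- continuous (fun _ => sqrt _) _ => apply continuous_sqrt_comp
  | |- continuous (fun _ => exp _) _ => apply continuous_exp_comp
  | |- continuous (fun _ => atan _) _ => apply continuous_atan_comp
  | |- continuous (fun _ => / _) _ => apply continuous_Rinv_comp
  | |- continuous Rinv _ => apply (continuous_Rinv_comp (fun y => y))
  | |- continuous (fun y => y) _ => apply continuous_id
  | |- continuous (Rmult ?c) _ =>
      apply (continuous_mult (K := R_AbsRing) (fun _ => c) (fun y => y))
  | |- continuous (Rminus ?c) _ =>
      apply (continuous_minus (V := R_NormedModule) (fun _ => c) (fun y => y))
  | |- continuous _ _ => assumption
  end.

Lemma continuous_acos_pos y : 0 < y -> continuous acos y.
Proof.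
  intros Hy.
  apply (continuous_ext_loc _ (fun z => atan (sqrt (1 - z²) / z))).
  - exists (mkposreal y Hy). intros z Hz.
    unfold ball in Hz; simpl in Hz; unfold AbsRing_ball, abs, minus, plus, opp in Hz; simpl in Hz.
    apply Rabs_lt_between in Hz. rewrite acos_atan; [reflexivity | lra].
  - unfold Rsqr, Rdiv. solve_continuous. lra.
Qed.

Lemma continuous_acos y : continuous acos y.
Proof.
  destruct (Rtotal_order y 0) as [Hy | [-> | Hy]].
  - apply (continuous_ext (fun z : R => PI - acos (- z))).
    + intros z. rewrite acos_opp. lra.
    + solve_continuous. apply (continuous_comp (fun z => - z) acos); solve_continuous.
      apply continuous_acos_pos. lra.
  - apply continuity_pt_filterlim, derivable_continuous_pt, derivable_pt_acos. lra.
  - apply continuous_acos_pos. exact Hy.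
Qed.

Section CharacteristicEquation.

Variables s x : R.
Hypothesis s_pos : 0 < s.

Definition P_re (u v : R) : R := u ^ 2 - v ^ 2 + (s + x) * u + s * x.
Definition P_im (u v : R) : R := 2 * u * v + (s + x) * v.
Definition Q_re (u v : R) : R := s * (1 - 2 * x) - s * u.
Definition Q_im (u v : R) : R := - s * v.

Definition normP2 (u v : R) : R := P_re u v ^ 2 + P_im u v ^ 2.
Definition normQ2 (u v : R) : R := Q_re u v ^ 2 + Q_im u v ^ 2.

(* Real and imaginary parts of P(u + iv) + e Q(u + iv) (c - i sn); equation (C) is the case
   e = exp (-tau u), c = cos (tau v), sn = sin (tau v). *)
Definition char_re (u v e c sn : R) : R :=
  P_re u v + e * (Q_re u v * c + Q_im u v * sn).
Definition char_im (u v e c sn : R) : R :=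
  P_im u v + e * (Q_im u v * c - Q_re u v * sn).

(* N = - conj(P) Q *)
Definition N_re (u v : R) : R := - (P_re u v * Q_re u v + P_im u v * Q_im u v).
Definition N_im (u v : R) : R := P_im u v * Q_re u v - P_re u v * Q_im u v.

(* Fpoly v = normP2 0 v - normQ2 0 v *)
Definition Fpoly (v : R) : R := v ^ 4 + x ^ 2 * v ^ 2 + s ^ 2 * (3 * x - 1) * (1 - x).

Lemma char_re_conj u v e c sn : char_re u (- v) e c (- sn) = char_re u v e c sn.
Proof. unfold char_re, P_re, Q_re, Q_im. ring. Qed.

Lemma char_im_conj u v e c sn : char_im u (- v) e c (- sn) = - char_im u v e c sn.
Proof. unfold char_im, P_im, Q_re, Q_im. ring. Qed.

Lemma char_root_modulus u v e c sn :
  char_re u v e c sn = 0 -> char_im u v e c sn = 0 -> c ^ 2 + sn ^ 2 = 1 ->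
  normP2 u v = e ^ 2 * normQ2 u v.
Proof.
  unfold char_re, char_im, normP2, normQ2. intros Hre Him Hcs.
  replace (P_re u v) with (- e * (Q_re u v * c + Q_im u v * sn)) by lra.
  replace (P_im u v) with (- e * (Q_im u v * c - Q_re u v * sn)) by lra.
  transitivity (e ^ 2 * (Q_re u v ^ 2 + Q_im u v ^ 2) * (c ^ 2 + sn ^ 2));
    [ring | rewrite Hcs; ring].
Qed.

Lemma char_root_iff_N u v e c sn : normQ2 u v <> 0 ->
  (char_re u v e c sn = 0 /\ char_im u v e c sn = 0 <->
   N_re u v = e * normQ2 u v * c /\ N_im u v = e * normQ2 u v * sn).
Proof.
  intros HQ.
  set (A := char_re u v e c sn). set (B := char_im u v e c sn).
  assert (Ere : N_re u v - e * normQ2 u v * c = - (Q_re u v * A + Q_im u v * B))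
    by (unfold A, B, N_re, normQ2, char_re, char_im; ring).
  assert (Eim : N_im u v - e * normQ2 u v * sn = Q_re u v * B - Q_im u v * A)
    by (unfold A, B, N_im, normQ2, char_re, char_im; ring).
  split; intros [H1 H2].
  - rewrite H1, H2 in Ere, Eim. split; lra.
  - assert (RA : normQ2 u v * A
                 = - (Q_re u v * (N_re u v - e * normQ2 u v * c)
                      + Q_im u v * (N_im u v - e * normQ2 u v * sn)))
      by (rewrite Ere, Eim; unfold normQ2; ring).
    assert (RB : normQ2 u v * B
                 = Q_re u v * (N_im u v - e * normQ2 u v * sn)
                   - Q_im u v * (N_re u v - e * normQ2 u v * c))
      by (rewrite Ere, Eim; unfold normQ2; ring).
    rewrite H1, H2 in RA, RB.
    split; apply (Rmult_eq_reg_l (normQ2 u v)); lra.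
Qed.

Lemma normP2_sub_normQ2_ge u v : 0 <= x <= 1 -> 0 <= u -> Fpoly v <= normP2 u v - normQ2 u v.
Proof.
  intros Hx Hu.
  replace (normP2 u v - normQ2 u v) with
    (Fpoly v + u * (u ^ 3 + 2 * u ^ 2 * (s + x) + 2 * u * v ^ 2 + u * x * (4 * s + x)
                    + 2 * v ^ 2 * (s + x) + 2 * s ^ 2 * (1 - x) + 2 * s * x ^ 2))
    by (unfold normP2, normQ2, Fpoly, P_re, P_im, Q_re, Q_im; ring).
  assert (0 <= u ^ 2 * (s + x)) by (apply Rmult_le_pos; nra).
  assert (0 <= v ^ 2 * (s + x)) by (apply Rmult_le_pos; nra).
  assert (0 <= u * x * (4 * s + x)) by (apply Rmult_le_pos; nra).
  assert (0 <= u * v ^ 2) by (apply Rmult_le_pos; nra).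
  assert (0 <= s ^ 2 * (1 - x)) by (apply Rmult_le_pos; nra).
  assert (0 <= u ^ 3) by (apply pow_le; lra).
  assert (0 <= s * x ^ 2) by (apply Rmult_le_pos; nra).
  nra.
Qed.

Lemma Fpoly_le_inv v w : 0 <= v -> 0 <= w -> Fpoly v <= Fpoly w -> v <= w.
Proof.
  unfold Fpoly. intros Hv Hw H.
  destruct (Rle_lt_dec v w) as [Hle | Hlt]; [exact Hle | exfalso].
  assert (w ^ 2 < v ^ 2) by nra. assert (w ^ 4 < v ^ 4) by nra. nra.
Qed.

Lemma Fpoly_pos_large v : 1/3 <= x < 1 -> v <> 0 -> 0 < Fpoly v.
Proof.
  intros Hx Hv. unfold Fpoly.
  assert (0 < v ^ 2) by (apply pow2_gt_0; exact Hv).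
  assert (0 <= s ^ 2 * (3 * x - 1) * (1 - x))
    by (apply Rmult_le_pos; [apply Rmult_le_pos; [apply pow2_ge_0 |] |]; lra).
  nra.
Qed.

Lemma no_nonneg_real_root u e : 0 < x < 1 -> 0 <= u -> 0 < e <= 1 -> char_re u 0 e 1 0 <> 0.
Proof.
  intros Hx Hu He. unfold char_re, P_re, Q_re, Q_im.
  assert (0 < s * x) by nra. assert (0 <= u ^ 2 + (s + x) * u) by nra.
  destruct (Rle_dec u (1 - 2 * x)).
  - assert (0 <= e * (s * (1 - 2 * x - u))) by (apply Rmult_le_pos; nra). nra.
  - assert (0 <= (1 - e) * (s * (u - (1 - 2 * x)))) by (apply Rmult_le_pos; nra). nra.
Qed.

Lemma N_re_imag v : N_re 0 v = s * (v ^ 2 * (1 + s - x) - (1 - 2 * x) * s * x).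
Proof. unfold N_re, P_re, P_im, Q_re, Q_im. ring. Qed.

Lemma N_im_imag v : N_im 0 v = s * v * (s * (1 - x) + x * (1 - 2 * x) - v ^ 2).
Proof. unfold N_im, P_re, P_im, Q_re, Q_im. ring. Qed.

Lemma N_norm_imag v : N_re 0 v ^ 2 + N_im 0 v ^ 2 = normQ2 0 v * (normQ2 0 v + Fpoly v).
Proof. unfold N_re, N_im, normQ2, Fpoly, P_re, P_im, Q_re, Q_im. ring. Qed.

Definition hpoly (u v : R) : R :=
  u ^ 2 * (v ^ 2 - s * (1 - x) - x * (1 - 2 * x))
  + u * (- 2 * (1 - 2 * x) * v ^ 2 - s ^ 2 * (1 - x) + s * (1 - x) * (1 - 3 * x)
         + x * (1 - 2 * x) * (1 - 3 * x))
  + v ^ 4 + 2 * (1 - 2 * x) ^ 2 * v ^ 2 + s ^ 2 * (1 - x) * (1 - 3 * x) + x ^ 2 * (1 - 2 * x) ^ 2.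

Definition qpoly (w v : R) : R :=
  (s * x * (1 - 2 * x) - w ^ 2 * (s + 1 - x)) * v ^ 2
  - w * (1 - x) * (s ^ 2 + s * (1 - x) + x * (1 - 2 * x)) * v
  + s * x * (1 - 2 * x) * (w ^ 2 - s * (1 - x) - x * (1 - 2 * x)).

Lemma cross_N_imag_axis w v :
  cross (N_re 0 w) (N_im 0 w) (N_re 0 v) (N_im 0 v) = s ^ 2 * (v - w) * qpoly w v.
Proof. unfold cross, N_re, N_im, P_re, P_im, Q_re, Q_im, qpoly. ring. Qed.

Lemma cross_N_horizontal u v :
  cross (N_re 0 v) (N_im 0 v) (N_re u v) (N_im u v) = s ^ 2 * u * v * hpoly u v.
Proof. unfold cross, N_re, N_im, P_re, P_im, Q_re, Q_im, hpoly. ring. Qed.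

Lemma qpoly_neg w v : 0 < x < 1/3 -> w ^ 2 < s * (1 - 2 * x) -> 0 <= v <= w -> qpoly w v < 0.
Proof.
  intros Hx Hw2 Hv. unfold qpoly.
  set (K := s ^ 2 + s * (1 - x) + x * (1 - 2 * x)).
  assert (HK : 0 < K) by (unfold K; nra).
  assert (0 <= v * (w - v) * ((1 - x) * K)) by (apply Rmult_le_pos; apply Rmult_le_pos; lra).
  assert (0 <= w ^ 2 * (s + 1 - x) * v ^ 2) by (apply Rmult_le_pos; [apply Rmult_le_pos |]; nra).
  assert (s * x * (1 - 2 * x) <= (1 - x) * K) by (unfold K; nra).
  assert (0 < s * x * (1 - 2 * x)) by (apply Rmult_lt_0_compat; nra).
  assert (w ^ 2 - s * (1 - x) - x * (1 - 2 * x) < 0) by nra.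
  assert (s * x * (1 - 2 * x) * (w ^ 2 - s * (1 - x) - x * (1 - 2 * x)) < 0) by nra.
  assert (v ^ 2 * (s * x * (1 - 2 * x) - (1 - x) * K) <= 0) by nra.
  nra.
Qed.

Lemma hpoly_ge u v : 0 < x < 1/3 -> 0 <= u -> normQ2 u v - normP2 u v <= hpoly u v.
Proof.
  intros Hx Hu.
  replace (hpoly u v) with
    (normQ2 u v - normP2 u v
     + s * u * (2 * u ^ 2 - (1 - 5 * x) * u + (1 - 4 * x + 5 * x ^ 2))
     + u ^ 4 + u * (2 * x * (u - (1 - 3 * x) / 4) ^ 2)
     + u * (x * (1 - 3 * x) * (7 - 13 * x)) / 8 + (x * (1 - 2 * x)) ^ 2
     + v ^ 2 * (3 * u ^ 2 - 2 * (1 - 3 * x) * u + 9 * x ^ 2 - 8 * x + 2)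
     + 2 * u * v ^ 2 * s + s ^ 2 * (1 - x) * u + 2 * v ^ 4)
    by (unfold hpoly, normP2, normQ2, P_re, P_im, Q_re, Q_im; field).
  assert (0 <= 2 * u ^ 2 - (1 - 5 * x) * u + (1 - 4 * x + 5 * x ^ 2))
    by (assert (0 <= (u - (1 - 5 * x) / 4) ^ 2) by apply pow2_ge_0; nra).
  assert (0 <= s * u * (2 * u ^ 2 - (1 - 5 * x) * u + (1 - 4 * x + 5 * x ^ 2)))
    by (apply Rmult_le_pos; nra).
  assert (0 <= u ^ 4) by (apply pow_le; lra).
  assert (0 <= u * (2 * x * (u - (1 - 3 * x) / 4) ^ 2))
    by (apply Rmult_le_pos; [lra | apply Rmult_le_pos; [lra | apply pow2_ge_0]]).
  assert (0 <= u * (x * (1 - 3 * x) * (7 - 13 * x)))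
    by (apply Rmult_le_pos; [lra | apply Rmult_le_pos; nra]).
  assert (0 <= (x * (1 - 2 * x)) ^ 2) by apply pow2_ge_0.
  assert (0 <= v ^ 2 * (3 * u ^ 2 - 2 * (1 - 3 * x) * u + 9 * x ^ 2 - 8 * x + 2))
    by (apply Rmult_le_pos; nra).
  assert (0 <= u * v ^ 2 * s) by (apply Rmult_le_pos; nra).
  assert (0 <= s ^ 2 * (1 - x) * u) by (apply Rmult_le_pos; nra).
  assert (0 <= v ^ 4) by nra.
  lra.
Qed.

(* The argument of N does not decrease from i w down the imaginary axis to i v ([qpoly_neg]),
   nor from i v horizontally to u + i v ([hpoly_ge]). *)
Lemma N_arg_ge_imag_axis w u v :
  0 < x < 1/3 -> w ^ 2 < s * (1 - 2 * x) -> 0 <= u -> 0 < v <= w ->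
  normP2 u v <= normQ2 u v -> 0 <= N_im u v ->
  0 <= cross (N_re 0 w) (N_im 0 w) (N_re u v) (N_im u v).
Proof.
  intros Hx Hw2 Hu Hv HPQ HN.
  assert (Hupper : forall z, 0 < z <= w -> 0 < N_im 0 z).
  { intros z Hz. rewrite N_im_imag. apply Rmult_lt_0_compat; nra. }
  apply (cross_nonneg_trans _ _ (N_re 0 v) (N_im 0 v)).
  - apply Hupper; lra.
  - apply Hupper; lra.
  - exact HN.
  - rewrite cross_N_imag_axis. pose proof (qpoly_neg w v Hx Hw2 ltac:(lra)).
    replace (s ^ 2 * (v - w) * qpoly w v) with (s ^ 2 * ((w - v) * - qpoly w v)) by ring.
    apply Rmult_le_pos; [nra | apply Rmult_le_pos; lra].
  - rewrite cross_N_horizontal. pose proof (hpoly_ge u v Hx Hu).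
    assert (0 <= s ^ 2 * u * v) by (apply Rmult_le_pos; nra). nra.
Qed.

(* x-level versions of omega_plus, h2 and theta: omega_plus s Y t is convertible to
   omega_at s (xplus s Y t), and likewise for h2 and theta. *)
Definition omega_at : R :=
  sqrt (/ 2 * (- x ^ 2 + sqrt (x ^ 4 + s ^ 2 * (12 * x ^ 2 - 16 * x + 4)))).

Definition h2_at (w : R) : R :=
  (w ^ 2 * (1 + s - x) - (1 - 2 * x) * s * x) / (s * ((1 - 2 * x) ^ 2 + w ^ 2)).

Definition theta_at : R := acos (h2_at omega_at).

Lemma omega_at_spec : 0 < x < 1/3 ->
  0 < omega_at /\ Fpoly omega_at = 0 /\ omega_at ^ 2 < s * (1 - 2 * x).
Proof.
  intros Hx.
  set (D := x ^ 4 + s ^ 2 * (12 * x ^ 2 - 16 * x + 4)).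
  assert (HD : x ^ 4 < D).
  { assert (0 < s ^ 2 * (12 * x ^ 2 - 16 * x + 4)) by (apply Rmult_lt_0_compat; nra).
    unfold D. lra. }
  assert (HsD : x ^ 2 < sqrt D).
  { rewrite <- (sqrt_pow2 (x ^ 2)) by nra. apply sqrt_lt_1; nra. }
  assert (HsD2 : sqrt D ^ 2 = D) by (apply pow2_sqrt; nra).
  set (I := / 2 * (- x ^ 2 + sqrt D)).
  assert (Hw2 : omega_at ^ 2 = I) by (apply pow2_sqrt; unfold I; lra).
  split; [| split].
  - change (0 < sqrt I). apply sqrt_lt_R0. unfold I. lra.
  - unfold Fpoly. replace (omega_at ^ 4) with ((omega_at ^ 2) ^ 2) by ring.
    rewrite Hw2. unfold I.
    replace ((/ 2 * (- x ^ 2 + sqrt D)) ^ 2) with (/ 4 * (x ^ 4 - 2 * x ^ 2 * sqrt D + sqrt D ^ 2))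
      by field.
    rewrite HsD2. unfold D. field.
  - rewrite Hw2. unfold I.
    assert (sqrt D < 2 * s * (1 - 2 * x) + x ^ 2).
    { rewrite <- (sqrt_pow2 (2 * s * (1 - 2 * x) + x ^ 2)) by nra.
      apply sqrt_lt_1; [pose proof (pow_le x 4); lra | apply pow2_ge_0 |].
      assert (0 < s * x ^ 2 * (s + (1 - 2 * x)))
        by (apply Rmult_lt_0_compat; [apply Rmult_lt_0_compat; [lra | apply pow_lt; lra] | lra]).
      unfold D. nra. }
    lra.
Qed.

Lemma theta_at_spec : 0 < x < 1/3 ->
  0 < theta_at < PI /\
  N_re 0 omega_at = normQ2 0 omega_at * cos theta_at /\
  N_im 0 omega_at = normQ2 0 omega_at * sin theta_at.
Proof.
  intros Hx.
  destruct omega_at_spec as (Hw & HF & Hw2); [exact Hx |].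
  set (w := omega_at) in *.
  set (K := normQ2 0 w).
  assert (HK : 0 < K) by (unfold K, normQ2, Q_re, Q_im; nra).
  assert (Hh : h2_at w = N_re 0 w / K).
  { rewrite N_re_imag. unfold K, h2_at, normQ2, Q_re, Q_im. field. split; nra. }
  assert (Hnorm : N_re 0 w ^ 2 + N_im 0 w ^ 2 = K ^ 2)
    by (rewrite N_norm_imag, HF; unfold K; ring).
  assert (Him : 0 < N_im 0 w) by (rewrite N_im_imag; apply Rmult_lt_0_compat; nra).
  assert (Hb : -1 < h2_at w < 1).
  { rewrite Hh. assert (N_re 0 w ^ 2 < K ^ 2) by nra.
    split; [apply (Rmult_lt_reg_r K) | apply (Rmult_lt_reg_r K)]; try field_simplify; nra. }
  unfold theta_at. fold w.
  split; [| split].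
  - apply acos_bound_lt. exact Hb.
  - rewrite cos_acos, Hh by lra. field. lra.
  - rewrite sin_acos by lra. rewrite Hh.
    replace (1 - (N_re 0 w / K)²) with ((N_im 0 w / K) ^ 2)
      by (unfold Rsqr; field_simplify_eq; [nra | lra]).
    rewrite sqrt_pow2 by (apply Rlt_le, Rdiv_lt_0_compat; lra).
    field. lra.
Qed.

Definition is_char_root (t u v : R) : Prop :=
  char_re u v (exp (- (t * u))) (cos (t * v)) (sin (t * v)) = 0 /\
  char_im u v (exp (- (t * u))) (cos (t * v)) (sin (t * v)) = 0.

Lemma is_char_root_conj t u v : is_char_root t u (- v) <-> is_char_root t u v.
Proof.
  unfold is_char_root. replace (t * - v) with (- (t * v)) by ring.
  rewrite cos_neg, sin_neg, char_re_conj, char_im_conj. lra.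
Qed.

Lemma is_char_root_abs t u v : is_char_root t u v -> is_char_root t u (Rabs v).
Proof.
  intros Hroot. destruct (Rcase_abs v).
  - rewrite Rabs_left by lra. apply is_char_root_conj. exact Hroot.
  - rewrite Rabs_right by lra. exact Hroot.
Qed.

Lemma unstable_root_bounds t u v : 0 <= t -> 0 < x < 1 -> 0 <= u -> is_char_root t u v ->
  v <> 0 /\ normP2 u v <= normQ2 u v /\ Fpoly v <= 0.
Proof.
  intros Ht Hx Hu [Hre Him].
  assert (He : 0 < exp (- (t * u)) <= 1).
  { split; [apply exp_pos | apply exp_opp_le_1; nra]. }
  assert (Hv : v <> 0).
  { intros ->. rewrite Rmult_0_r, cos_0, sin_0 in Hre.
    exact (no_nonneg_real_root u _ Hx Hu He Hre). }
  assert (Hcs : cos (t * v) ^ 2 + sin (t * v) ^ 2 = 1)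
    by (rewrite Rplus_comm; apply sin2_cos2_pow).
  pose proof (char_root_modulus _ _ _ _ _ Hre Him Hcs) as Hmod.
  assert (HPQ : normP2 u v <= normQ2 u v).
  { assert (0 <= normQ2 u v) by (unfold normQ2; nra).
    assert (exp (- (t * u)) ^ 2 <= 1) by nra. nra. }
  pose proof (normP2_sub_normQ2_ge u v ltac:(lra) Hu).
  repeat split; auto; lra.
Qed.

Lemma root_re_neg_large t u v : 0 <= t -> 1/3 <= x < 1 -> is_char_root t u v -> u < 0.
Proof.
  intros Ht Hx Hroot. apply Rnot_le_lt. intros Hu.
  destruct (unstable_root_bounds t u v Ht ltac:(lra) Hu Hroot) as (Hv & _ & HF).
  pose proof (Fpoly_pos_large v Hx Hv). lra.
Qed.

Lemma root_re_neg_small t u v : 0 <= t -> 0 < x < 1/3 -> t * omega_at < theta_at ->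
  is_char_root t u v -> u < 0.
Proof.
  intros Ht Hx Htw Hroot. apply Rnot_le_lt. intros Hu.
  pose proof (is_char_root_abs t u v Hroot) as Habs. pose proof (Rabs_pos v) as Hv.
  revert Habs Hv. generalize (Rabs v). clear v Hroot. intros v Hroot Hv.
  destruct (omega_at_spec Hx) as (Hw & HF & Hw2).
  destruct (theta_at_spec Hx) as (Hth & Hcos & Hsin).
  set (w := omega_at) in *. set (th := theta_at) in *.
  destruct (unstable_root_bounds t u v Ht ltac:(lra) Hu Hroot) as (Hv0 & HPQ & HFv).
  assert (Hvw : v <= w) by (apply Fpoly_le_inv; lra).
  assert (HQ : 0 < normQ2 u v)
    by (unfold normQ2, Q_im; assert (0 < s * v) by (apply Rmult_lt_0_compat; lra); nra).
  destruct (proj1 (char_root_iff_N u v _ _ _ ltac:(lra)) Hroot) as [HNre HNim].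
  set (e := exp (- (t * u))) in *. set (c := cos (t * v)) in *. set (sn := sin (t * v)) in *.
  assert (He : 0 < e) by apply exp_pos.
  assert (Hsn : 0 <= sn) by (apply sin_ge_0; nra).
  assert (Hcross := N_arg_ge_imag_axis w u v Hx Hw2 Hu ltac:(lra) HPQ
                      ltac:(rewrite HNim; apply Rmult_le_pos; [apply Rmult_le_pos |]; lra)).
  (* the cross product equals normQ2 0 w * e * normQ2 u v * sin (t v - theta) *)
  unfold cross in Hcross. rewrite HNre, HNim, Hcos, Hsin in Hcross.
  assert (Hneg : sin (t * v - th) < 0) by (apply sin_lt_0_var; nra).
  rewrite sin_minus in Hneg. fold sn c in Hneg.
  assert (0 < normQ2 0 w * (e * normQ2 u v))
    by (apply Rmult_lt_0_compat; [unfold normQ2, Q_re, Q_im; nra | nra]).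
  nra.
Qed.

End CharacteristicEquation.

Lemma charC_root_iff s Y t u v :
  charC s Y t (u, v) = RtoC 0 <-> is_char_root s (xplus s Y t) t u v.
Proof.
  assert (E : charC s Y t (u, v) =
              (char_re s (xplus s Y t) u v (exp (- (t * u))) (cos (t * v)) (sin (t * v)),
               char_im s (xplus s Y t) u v (exp (- (t * u))) (cos (t * v)) (sin (t * v)))).
  { unfold charC, cexp, char_re, char_im, P_re, P_im, Q_re, Q_im, xplus, Cplus, Cmult, RtoC; simpl.
    replace (- t * u - 0 * v) with (- (t * u)) by ring.
    replace (- t * v + 0 * u) with (- (t * v)) by ring.
    rewrite cos_neg, sin_neg.
    apply injective_projections; simpl; unfold Rdiv; ring. }
  rewrite E. unfold is_char_root, RtoC. split.
  - intros H. injection H. auto.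
  - intros [-> ->]. reflexivity.
Qed.

Lemma omega_at_third s : omega_at s (1/3) = 0.
Proof.
  unfold omega_at.
  replace ((1/3) ^ 4 + s ^ 2 * (12 * (1/3) ^ 2 - 16 * (1/3) + 4)) with ((1/9) ^ 2) by field.
  rewrite sqrt_pow2 by lra. replace (/ 2 * (- (1/3) ^ 2 + 1/9)) with 0 by field.
  apply sqrt_0.
Qed.

Lemma theta_at_third s : 0 < s -> theta_at s (1/3) = PI.
Proof.
  intros Hs. unfold theta_at. rewrite omega_at_third.
  replace (h2_at s (1/3) 0) with (- (1)) by (unfold h2_at; field; lra).
  rewrite acos_opp, acos_1. ring.
Qed.

Lemma continuous_omega_at s x : continuous (omega_at s) x.
Proof. unfold omega_at. solve_continuous. Qed.

Lemma continuous_theta_at s x : 0 < s -> x < 1/2 -> continuous (theta_at s) x.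
Proof.
  intros Hs Hx. unfold theta_at.
  apply (continuous_comp (fun y => h2_at s y (omega_at s y)) acos); [| apply continuous_acos].
  unfold h2_at, Rdiv. pose proof (continuous_omega_at s x).
  solve_continuous.
  assert (0 < (1 - 2 * x) ^ 2) by (apply pow_lt; lra).
  assert (0 <= omega_at s x ^ 2) by apply pow2_ge_0.
  apply Rgt_not_eq, Rmult_lt_0_compat; lra.
Qed.

Section Delay.

Variables s Y : R.
Hypothesis s_pos : 0 < s.
Hypothesis Y_gt : 3 * s < Y.

Definition phase_gap (t : R) : R := t * omega_plus s Y t - theta s Y t.

Lemma xplus_pos t : 0 < xplus s Y t.
Proof. unfold xplus. apply Rmult_lt_0_compat; [apply Rdiv_lt_0_compat; lra | apply exp_pos]. Qed.

Lemma xplus_lt_iff t1 t2 : xplus s Y t1 < xplus s Y t2 <-> t1 < t2.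
Proof.
  unfold xplus. assert (0 < s / Y) by (apply Rdiv_lt_0_compat; lra). split; intros Hlt.
  - apply Rmult_lt_reg_l, exp_lt_inv in Hlt; nra.
  - apply Rmult_lt_compat_l, exp_increasing; nra.
Qed.

Lemma xplus_log c : 0 < c -> xplus s Y (/ s * ln (Y / (c * s))) = / c.
Proof.
  intros Hc. unfold xplus.
  replace (s * (/ s * ln (Y / (c * s)))) with (ln (Y / (c * s))) by (field; lra).
  rewrite exp_ln by (apply Rdiv_lt_0_compat; nra). field. split; lra.
Qed.

Lemma xplus_tau_star : xplus s Y (tau_star s Y) = 1/3.
Proof. unfold tau_star. rewrite xplus_log by lra. lra. Qed.

Lemma xplus_tau_c : xplus s Y (tau_c s Y) = 1.
Proof.
  unfold tau_c. replace (Y / s) with (Y / (1 * s)) by (f_equal; ring).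
  rewrite xplus_log by lra. lra.
Qed.

Lemma tau_star_pos : 0 < tau_star s Y.
Proof.
  apply (xplus_lt_iff 0). unfold xplus at 1. rewrite Rmult_0_r, exp_0, xplus_tau_star.
  apply (Rmult_lt_reg_r Y); [lra |]. field_simplify; lra.
Qed.

Lemma tau_star_lt_tau_c : tau_star s Y < tau_c s Y.
Proof. apply xplus_lt_iff. rewrite xplus_tau_star, xplus_tau_c. lra. Qed.

Lemma xplus_small t : 0 <= t < tau_star s Y -> 0 < xplus s Y t < 1/3.
Proof.
  intros Ht. split; [apply xplus_pos |]. rewrite <- xplus_tau_star. apply xplus_lt_iff. lra.
Qed.

Lemma xplus_large t : tau_star s Y <= t < tau_c s Y -> 1/3 <= xplus s Y t < 1.
Proof.
  intros [Ht1 Ht2]. rewrite <- xplus_tau_star, <- xplus_tau_c.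
  split; [destruct Ht1 as [Ht1 | <-]; [left; apply xplus_lt_iff |] | apply xplus_lt_iff]; lra.
Qed.

Lemma theta_range t : 0 <= t < tau_star s Y -> 0 < theta s Y t < PI.
Proof. intros Ht. exact (proj1 (theta_at_spec s _ s_pos (xplus_small t Ht))). Qed.

Lemma phase_gap_0 : phase_gap 0 < 0.
Proof. pose proof (theta_range 0 (conj (Rle_refl 0) tau_star_pos)). unfold phase_gap. lra. Qed.

Lemma phase_gap_tau_star : phase_gap (tau_star s Y) = - PI.
Proof.
  change (tau_star s Y * omega_at s (xplus s Y (tau_star s Y))
          - theta_at s (xplus s Y (tau_star s Y)) = - PI).
  rewrite xplus_tau_star, omega_at_third, theta_at_third by exact s_pos. ring.
Qed.

Lemma continuity_pt_phase_gap t : t <= tau_star s Y -> continuity_pt phase_gap t.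
Proof.
  intros Ht. apply continuity_pt_filterlim.
  assert (Hx : continuous (xplus s Y) t) by (unfold xplus; solve_continuous).
  assert (xplus s Y t < 1/2).
  { destruct Ht as [Ht | ->]; [| rewrite xplus_tau_star; lra].
    apply xplus_lt_iff in Ht. rewrite xplus_tau_star in Ht. lra. }
  apply (continuous_minus (V := R_NormedModule) (fun t => t * omega_plus s Y t) (theta s Y)).
  - apply (continuous_mult (K := R_AbsRing) (fun t => t)); [apply continuous_id |].
    exact (continuous_comp (xplus s Y) (omega_at s) t Hx (continuous_omega_at s _)).
  - apply (continuous_comp (xplus s Y) (theta_at s) t Hx). apply continuous_theta_at; assumption.
Qed.

Lemma crossing_iff n t :
  crossing s Y n t <-> 0 < t < tau_star s Y /\ phase_gap t - 2 * INR n * PI = 0.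
Proof. unfold crossing, phase_gap. split; intros [Ht Heq]; split; auto; lra. Qed.

Lemma crossings_exist (n N : nat) (M t0 : R) :
  0 <= t0 <= tau_star s Y -> M = t0 * omega_plus s Y t0 ->
  (2 * INR N + 1) * PI <= M -> (n <= N)%nat ->
  exists t1 t2, t1 < t2 /\ crossing s Y n t1 /\ crossing s Y n t2.
Proof.
  intros Ht0 HM HMN Hn.
  pose proof PI_RGT_0. pose proof (pos_INR n). pose proof (le_INR _ _ Hn).
  set (g := fun t => phase_gap t - 2 * INR n * PI).
  assert (Ht0' : 0 < t0 < tau_star s Y).
  { split; apply Rnot_le_lt; intros Hle.
    - replace t0 with 0 in HM by lra. nra.
    - replace t0 with (tau_star s Y) in HM by lra.
      change (M = tau_star s Y * omega_at s (xplus s Y (tau_star s Y))) in HM.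
      rewrite xplus_tau_star, omega_at_third in HM. nra. }
  pose proof (theta_range t0 ltac:(lra)).
  assert (Hg0 : g 0 < 0) by (unfold g; pose proof phase_gap_0; nra).
  assert (Hgt0 : 0 < g t0) by (unfold g, phase_gap; rewrite <- HM; nra).
  assert (Hgstar : g (tau_star s Y) < 0) by (unfold g; rewrite phase_gap_tau_star; nra).
  assert (Hc : forall t, t <= tau_star s Y -> continuity_pt g t).
  { intros t Ht. apply continuity_pt_minus; [apply continuity_pt_phase_gap; assumption |].
    apply continuity_pt_const. intros a b. reflexivity. }
  destruct (Ranalysis5.IVT_interv g 0 t0) as (t1 & Ht1 & Hg1);
    [intros; apply Hc; lra | lra | assumption | assumption |].
  destruct (Ranalysis5.IVT_interv (fun t => - g t) t0 (tau_star s Y)) as (t2 & Ht2 & Hg2);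
    [intros; apply continuity_pt_opp, Hc; lra | lra | lra | lra |].
  assert (t1 <> 0 /\ t1 <> t0) as [] by (split; intros ->; lra).
  assert (t2 <> t0 /\ t2 <> tau_star s Y) as [] by (split; intros ->; lra).
  exists t1, t2. split; [lra |].
  split; apply crossing_iff; split; try lra; unfold g in *; lra.
Qed.

Lemma no_crossing_above (n N : nat) (M : R) :
  (forall t, 0 <= t <= tau_star s Y -> t * omega_plus s Y t <= M) ->
  M <= 2 * (INR N + 1) * PI -> (N + 1 <= n)%nat -> forall t, ~ crossing s Y n t.
Proof.
  intros Hmax HM Hn t [Ht Heq].
  pose proof (theta_range t ltac:(lra)). pose proof (Hmax t ltac:(lra)).
  apply le_INR in Hn. rewrite plus_INR in Hn. simpl in Hn. pose proof PI_RGT_0. nra.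
Qed.

Lemma extreme_crossings :
  (exists z, crossing s Y 0 z) ->
  exists ta tb, crossing s Y 0 ta /\ crossing s Y 0 tb /\
    forall t, 0 <= t <= tau_star s Y -> 0 <= phase_gap t -> ta <= t <= tb.
Proof.
  intros (z & Hz). apply crossing_iff in Hz.
  rewrite INR_0, Rmult_0_r, Rmult_0_l, Rminus_0_r in Hz.
  assert (Hc : forall t, 0 <= t <= tau_star s Y -> continuity_pt phase_gap t)
    by (intros; apply continuity_pt_phase_gap; lra).
  assert (Hstar : phase_gap (tau_star s Y) < 0)
    by (rewrite phase_gap_tau_star; pose proof PI_RGT_0; lra).
  destruct (first_zero _ _ _ Hc phase_gap_0 (ex_intro _ z Hz)) as (ta & Hta & Hga & Hbelow).
  destruct (last_zero _ _ _ Hc Hstar (ex_intro _ z Hz)) as (tb & Htb & Hgb & Habove).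
  exists ta, tb. split; [| split].
  - apply crossing_iff. rewrite INR_0, Rmult_0_r, Rmult_0_l, Rminus_0_r. auto.
  - apply crossing_iff. rewrite INR_0, Rmult_0_r, Rmult_0_l, Rminus_0_r. auto.
  - intros t Ht Hgap. split; apply Rnot_lt_le; intros Hlt.
    + specialize (Hbelow t ltac:(lra)). lra.
    + specialize (Habove t ltac:(lra)). lra.
Qed.

Lemma crossing_has_imag_pair n t : crossing s Y n t -> has_imag_pair s Y t.
Proof.
  intros [Ht Heq].
  set (x := xplus s Y t).
  assert (Hx : 0 < x < 1/3) by (apply xplus_small; lra).
  destruct (omega_at_spec s x s_pos Hx) as (Hw & _ & _).
  destruct (theta_at_spec s x s_pos Hx) as (_ & Hcos & Hsin).
  exists (omega_at s x). split; [exact Hw |].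
  apply charC_root_iff. fold x.
  apply char_root_iff_N; [unfold normQ2, Q_im; assert (0 < s * omega_at s x) by nra; nra |].
  change (t * omega_at s x = theta_at s x + 2 * INR n * PI) in Heq.
  rewrite Rmult_0_r, Ropp_0, exp_0, Rmult_1_l, Heq, cos_period, sin_period. lra.
Qed.

Lemma imag_pair_phase_gap_nonneg t : 0 <= t < tau_c s Y -> has_imag_pair s Y t ->
  t < tau_star s Y /\ 0 <= phase_gap t.
Proof.
  intros Ht (w & Hw & Hroot).
  apply charC_root_iff in Hroot. set (x := xplus s Y t) in Hroot.
  assert (HQ : 0 < normQ2 s x 0 w)
    by (unfold normQ2, Q_im; assert (0 < s * w) by (apply Rmult_lt_0_compat; lra); nra).
  apply char_root_iff_N in Hroot; [| lra].
  rewrite Rmult_0_r, Ropp_0, exp_0, Rmult_1_l in Hroot. destruct Hroot as [Hre Him].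
  assert (HF : Fpoly s x w = 0).
  { pose proof (N_norm_imag s x w) as Hn. rewrite Hre, Him in Hn.
    replace ((normQ2 s x 0 w * cos (t * w)) ^ 2 + (normQ2 s x 0 w * sin (t * w)) ^ 2)
      with (normQ2 s x 0 w * normQ2 s x 0 w * (sin (t * w) ^ 2 + cos (t * w) ^ 2)) in Hn by ring.
    rewrite sin2_cos2_pow in Hn.
    apply (Rmult_eq_reg_l (normQ2 s x 0 w)); nra. }
  assert (Ht_star : t < tau_star s Y).
  { apply Rnot_le_lt. intros Hle.
    pose proof (Fpoly_pos_large s x w (xplus_large t ltac:(lra)) ltac:(lra)). lra. }
  split; [exact Ht_star |].
  assert (Hx : 0 < x < 1/3) by (apply xplus_small; lra).
  destruct (omega_at_spec s x s_pos Hx) as (Hwo & HFo & _).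
  destruct (theta_at_spec s x s_pos Hx) as (Hth & Hcos & _).
  assert (Hweq : w = omega_at s x) by (apply Rle_antisym; apply (Fpoly_le_inv s x); lra).
  rewrite <- Hweq in Hcos.
  change (0 <= t * omega_at s x - theta_at s x). rewrite <- Hweq.
  apply Rnot_lt_le. intros Hlt.
  assert (cos (theta_at s x) < cos (t * w)) by (apply cos_decreasing_1; nra).
  assert (cos (t * w) = cos (theta_at s x)) by (apply (Rmult_eq_reg_l (normQ2 s x 0 w)); lra).
  lra.
Qed.

Lemma phase_gap_neg_E_plus_LAS t : 0 <= t < tau_c s Y ->
  (t < tau_star s Y -> phase_gap t < 0) -> E_plus_LAS s Y t.
Proof.
  intros Ht Hgap [u v] Hroot. simpl.
  apply charC_root_iff in Hroot.
  destruct (Rlt_le_dec t (tau_star s Y)) as [Hlt | Hge].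
  - apply (root_re_neg_small s _ s_pos t u v ltac:(lra) (xplus_small t ltac:(lra)));
      [| exact Hroot].
    exact (Rminus_lt _ _ (Hgap Hlt)).
  - exact (root_re_neg_large s _ s_pos t u v ltac:(lra) (xplus_large t ltac:(lra)) Hroot).
Qed.

End Delay.

Theorem corollary3p5 :
  forall (s Y : R) (N : nat) (M : R),
    0 < s -> 3 * s < Y ->
    (* M = max_{tau in [0, tau^*]} tau * omega_+(tau) *)
    (exists t0, 0 <= t0 <= tau_star s Y /\ M = t0 * omega_plus s Y t0) ->
    (forall t, 0 <= t <= tau_star s Y -> t * omega_plus s Y t <= M) ->
    (2 * INR N + 1) * PI <= M <= 2 * (INR N + 1) * PI ->
    (* 1 *)
    (forall n : nat, (n <= N)%nat ->
       exists t1 t2, t1 < t2 /\ crossing s Y n t1 /\ crossing s Y n t2) /\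
    (* 2 *)
    (forall n : nat, (N + 1 <= n)%nat -> forall t, ~ crossing s Y n t) /\
    (* 3 and 4 *)
    ((exists (n : nat) (t : R), crossing s Y n t) ->
     exists ta tb : R,
       (* ta = tau_0^1, tb = tau_0^{j_0}: smallest / largest crossing for n = 0 *)
       crossing s Y 0 ta /\ crossing s Y 0 tb /\
       (forall t, crossing s Y 0 t -> ta <= t <= tb) /\
       (* 3: smallest / largest tau in [0, tau_c) with purely imaginary roots *)
       has_imag_pair s Y ta /\ has_imag_pair s Y tb /\
       (forall t, 0 <= t < tau_c s Y -> has_imag_pair s Y t -> ta <= t <= tb) /\
       (* 4 *)
       (forall t, (0 <= t < ta \/ tb < t < tau_c s Y) -> E_plus_LAS s Y t)).
Proof.
  intros s Y N M Hs HY (t0 & Ht0 & HM) Hmax [HMlo HMhi].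
  split; [| split].
  - intros n Hn. exact (crossings_exist s Y Hs HY n N M t0 Ht0 HM HMlo Hn).
  - exact (fun n Hn => no_crossing_above s Y Hs HY n N M Hmax HMhi Hn).
  - intros _.
    destruct (crossings_exist s Y Hs HY 0 N M t0 Ht0 HM HMlo (Nat.le_0_l N))
      as (t1 & _ & _ & Hcross & _).
    destruct (extreme_crossings s Y Hs HY (ex_intro _ t1 Hcross))
      as (ta & tb & Hta & Htb & Hbetween).
    pose proof (proj1 Hta). pose proof (proj1 Htb). pose proof (tau_star_lt_tau_c s Y Hs HY).
    exists ta, tb.
    split; [exact Hta |]. split; [exact Htb |]. split; [| split; [| split; [| split]]].
    + intros t Ht. apply crossing_iff in Ht. destruct Ht as [Ht Hgap].
      rewrite INR_0 in Hgap. apply Hbetween; lra.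
    + exact (crossing_has_imag_pair s Y Hs HY 0 ta Hta).
    + exact (crossing_has_imag_pair s Y Hs HY 0 tb Htb).
    + intros t Ht Himag. destruct (imag_pair_phase_gap_nonneg s Y Hs HY t Ht Himag).
      apply Hbetween; [lra | assumption].
    + intros t Ht. apply (phase_gap_neg_E_plus_LAS s Y Hs HY t); [lra |].
      intros Hlt. apply Rnot_le_lt. intros Hgap. specialize (Hbetween t ltac:(lra) Hgap). lra.
Qed.
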